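(* Let $N\ge 3$ and let $\mathbf{g}=\mathbf{1}_{[0,W-1]}\in\mathbb{R}^N$ be the rectangular window ($\mathbf{g}[n]=1$ for $0\le n\le W-1$ and $0$ for $W\le n\le N-1$). Suppose (1) $2\le W\le N-1$, and (2) $N$ is coprime to $W$ and to $W-1$. Then for every non-vanishing $\mathbf{x}\in\mathbb{C}^N$, the algebraic algorithm described in the context, applied to the STFT magnitude $|\mathbf{X}[m,k]|^2$ of $\mathbf{x}$ with this window and $L=1$, outputs $e^{i\phi}\mathbf{x}$ for some $\phi\in\mathbb{R}$.
   Context: A vector $\mathbf{x}$ is non-vanishing if $\mathbf{x}[n]\ne0$ for all $n$. Signals and windows are indexed by $\{0,\dots,N-1\}$ and extended $N$-periodically. The STFT of $\mathbf{x}\in\mathbb{C}^N$ with window $\mathbf{g}$ and step $L=1$ is $\mathbf{X}[m,k]=\sum_{n=0}^{N-1}\mathbf{x}[n]\mathbf{g}[m-n]e^{-2\pi i kn/N}$, $m,k=0,\dots,N-1$. Algebraic algorithm: given $\mathbf{Y}[m,k]=|\mathbf{X}[m,k]|^2$, (1) compute $\mathbf{Z}[m,\ell]=\sum_{k=0}^{N-1}\mathbf{Y}[m,k]e^{-2\pi i k\ell/N}$ and $\mathbf{z}_\ell=(\mathbf{Z}[m,\ell])_{m=0}^{N-1}$; (2) for $\ell=0,1$ compute $\mathbf{x}_\ell=\frac1N\mathbf{G}_\ell^{-1}\mathbf{z}_\ell$, where $\mathbf{G}_\ell$ is the $N\times N$ circulant matrix with first column $(\mathbf{g}[m]\overline{\mathbf{g}[(m-\ell)\bmod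 N]})_{m=0}^{N-1}$, and set $\hat{\mathbf{x}}[0]=\sqrt{\mathbf{x}_0[0]}$; (3) recursively for $n=0,\dots,N-2$ define $\hat{\mathbf{x}}[n+1]$ by $\overline{\hat{\mathbf{x}}[n+1]}=\mathbf{x}_1[n]/\hat{\mathbf{x}}[n]$; output $\hat{\mathbf{x}}$. *)

From HB Require Import structures.
From mathcomp Require Import all_boot all_order all_algebra.
From mathcomp Require Import all_classical all_reals.
From mathcomp Require Import exp trigo.
From mathcomp Require Import complex.
Set Implicit Arguments. Unset Strict Implicit. Unset Printing Implicit Defensive.
Import Order.TTheory GRing.Theory Num.Theory ComplexField.
Local Open Scope ring_scope.
Local Open Scope complex_scope.

Section STFT.
Variable R : realType.
Local Notation C := R[i].

Definition expi (t : R) : C := (cos t) +i* (sin t).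

Definition twiddle (N k n : nat) : C :=
  expi (- (2 * pi * (k * n)%N%:R / N%:R)).

(* Signals/windows are functions nat -> C; only indices 0..N-1 matter,
   and they are extended N-periodically through (_ %% N). *)
Definition stft (N : nat) (g x : nat -> C) (m k : nat) : C :=
  \sum_(n < N) x n * g ((m + N - n) %% N)%N * twiddle N k n.

Definition stft_mag2 (N : nat) (g x : nat -> C) (m k : nat) : C :=
  `|stft N g x m k| ^+ 2.

Definition rect_window (N W : nat) (n : nat) : C :=
  if (n %% N < W)%N then 1 else 0.

Definition Zcoef (N : nat) (Y : nat -> nat -> C) (m l : nat) : C :=
  \sum_(k < N) Y m k * twiddle N k l.

Definition zvec (N : nat) (Y : nat -> nat -> C) (l : nat) : 'cV[C]_N :=
  \col_(m < N) Zcoef N Y m l.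

Definition Gcol (N : nat) (g : nat -> C) (l m : nat) : C :=
  g (m %% N)%N * (g ((m + N - l %% N) %% N)%N)^*.

Definition Gmat (N : nat) (g : nat -> C) (l : nat) : 'M[C]_N :=
  \matrix_(i < N, j < N) Gcol N g l ((i + N - j) %% N)%N.

Definition xl_vec (N : nat) (g : nat -> C) (Y : nat -> nat -> C) (l : nat)
  : 'cV[C]_N := (N%:R)^-1 *: (invmx (Gmat N g l) *m zvec N Y l).

(* reading entry n of a column vector (0 outside 0..N-1) *)
Definition vget (N : nat) (v : 'cV[C]_N) (n : nat) : C :=
  odflt 0 (omap (fun i : 'I_N => v i ord0) (insub n)).

Definition xl (N : nat) (g : nat -> C) (Y : nat -> nat -> C) (l n : nat) : C :=
  vget (xl_vec N g Y l) n.

Fixpoint xhat (N : nat) (g : nat -> C) (Y : nat -> nat -> C) (n : nat) : C :=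
  match n with
  | 0 => sqrtC (xl N g Y 0 0)
  | n'.+1 => (xl N g Y 1 n' / xhat N g Y n')^*
  end.

Definition algebraic_algorithm (N : nat) (g : nat -> C) (Y : nat -> nat -> C)
  : nat -> C := xhat N g Y.

End STFT.

Arguments expi {R} t.
Arguments twiddle {R} N k n.
Arguments stft {R} N g x m k.
Arguments stft_mag2 {R} N g x m k.
Arguments rect_window {R} N W n.
Arguments Zcoef {R} N Y m l.
Arguments zvec {R} N Y l.
Arguments Gcol {R} N g l m.
Arguments Gmat {R} N g l.
Arguments xl_vec {R} N g Y l.
Arguments vget {R} N v n.
Arguments xl {R} N g Y l n.
Arguments xhat {R} N g Y n.
Arguments algebraic_algorithm {R} N g Y _.

From mathcomp Require Import all_boot all_order all_algebra.
From mathcomp Require Import all_classical all_reals.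
From mathcomp Require Import trigo complex.
From mathcomp Require Import zify ring lra.
Set Implicit Arguments.
Unset Strict Implicit.
Unset Printing Implicit Defensive.
Import Order.TTheory GRing.Theory Num.Theory ComplexField.
Local Open Scope ring_scope.

(* Taking the DFT of |X[m, .]|^2 in frequency gives, by orthogonality of the N-th
   roots of unity, z_l = N G_l x_l with x_l[n] = x[n] conj(x[n + l]).  For the
   rectangular window the first column of G_l (l = 0, 1) is the indicator of a
   cyclic interval of length K = W - l.  A row vector annihilated by such a
   circulant has all its cyclic window sums of length K equal to zero, so it is
   K-periodic as well as N-periodic; since gcd(N, K) = 1 it is constant, hence
   zero.  Thus step (2) recovers |x[n]|^2 and x[n] conj(x[n + 1]) exactly, and the
   recursion of step (3) returns u x with the unimodular constant u = |x[0]| / x[0]. *)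

Section Expi.
Variable R : realType.
Local Notation C := R[i].

Lemma expi0 : expi 0 = 1 :> C.
Proof. by rewrite /expi cos0 sin0. Qed.

Lemma expiD (a b : R) : expi (a + b) = expi a * expi b :> C.
Proof. rewrite /expi sinD cosD /=; simpc; congr (_ +i* _)%C; ring. Qed.

Lemma expiJ (a : R) : (expi a)^* = expi (- a) :> C.
Proof. by rewrite /expi cosN sinN. Qed.

Lemma expiX (a : R) n : expi a ^+ n = expi (n%:R * a) :> C.
Proof.
elim: n => [|n IH]; first by rewrite mul0r expi0.
by rewrite exprS IH -expiD -addn1 natrD mulrDl mul1r addrC.
Qed.

Lemma cos_lt1 (t : R) : 0 < t < pi *+ 2 -> cos t < 1.
Proof.
have cos_lt1_pi s : 0 < s <= pi -> cos s < 1.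
  move=> /andP[s0 spi]; rewrite -cos0 ltr_cos // in_itv /= ?lexx ?(ltW s0) //.
  exact: pi_ge0.
move=> /andP[t0 t2pi]; have [tpi|pit] := leP t pi; first by apply: cos_lt1_pi; rewrite t0.
rewrite -cosN -cosD2pi; apply: cos_lt1_pi.
rewrite mulr2n; apply/andP; split; lra.
Qed.

Lemma expi_neq1 (t : R) : 0 < t < pi *+ 2 -> expi t != 1 :> C.
Proof.
move=> /cos_lt1; apply: contraTneq => /(congr1 (@complex.Re R)) /= ->.
by rewrite ltxx.
Qed.

Lemma expi_onto (z : C) : `|z| = 1 -> exists phi : R, expi phi = z.
Proof.
case: z => a b h.
have hab : a ^+ 2 + b ^+ 2 = 1.
  by have := add_Re2_Im2 (a +i* b)%C; rewrite h expr1n => /(congr1 (@complex.Re R)).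
have a_itv : a \in `[-1, 1] by rewrite in_itv /=; apply/andP; split; nra.
have sin_acos_a : sin (acos a) = `|b|.
  by rewrite sin_acos -?in_itv // (_ : 1 - a ^+ 2 = b ^+ 2) ?sqrtr_sqr //; lra.
exists (if 0 <= b then acos a else - acos a); rewrite /expi.
case: ifP => b0; first by rewrite acosK // sin_acos_a ger0_norm.
by rewrite cosN sinN acosK // sin_acos_a ltr0_norm ?opprK // ltNge b0.
Qed.

End Expi.

Section ModArith.
Local Open Scope nat_scope.

Lemma modnDBml N a b : b <= N -> (a %% N + N - b) %% N = (a + N - b) %% N.
Proof.
move=> bN; rewrite [in RHS](divn_eq a N).
have -> : a %/ N * N + a %% N + N - b = a %/ N * N + (a %% N + N - b).
  by move: (a %/ N * N) (a %% N) => q r; lia.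
by rewrite modnMDl.
Qed.

Lemma modnDKB N j t : j <= N -> ((j + t) %% N + N - j) %% N = t %% N.
Proof. by move=> jN; rewrite modnDBml // (_ : j + t + N - j = t + N) ?modnDr //; lia. Qed.

Lemma modnBB N m j l : j < N -> l < N ->
  ((m + N - j) %% N + N - l) %% N = (m + N - (j + l) %% N) %% N.
Proof.
move=> jN lN; rewrite modnDBml ?(ltnW lN) //.
have [jlN|Njl] := ltnP (j + l) N.
  by rewrite (modn_small jlN) -(modnDr (m + N - (j + l))); congr (_ %% N); lia.
rewrite -[in RHS](subnK Njl) modnDr (@modn_small (j + l - N)); last lia.
by congr (_ %% N); lia.
Qed.

End ModArith.

Lemma sum_prim_root_exp (F : idomainType) n (z : F) a : n.-primitive_root z ->
  \sum_(k < n) z ^+ (k * a) = if (n %| a)%N then n%:R else 0.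
Proof.
move=> prim_z; under eq_bigr do rewrite mulnC exprM.
rewrite (prim_order_dvd prim_z); case: eqP => [->|/eqP za_neq1].
  by under eq_bigr do rewrite expr1n; rewrite sumr_const card_ord.
have := subrX1 (z ^+ a) n.
rewrite exprAC (prim_expr_order prim_z) expr1n subrr => /esym/eqP.
by rewrite mulf_eq0 subr_eq0 (negbTE za_neq1) => /eqP.
Qed.

Section DFT.
Variables (R : realType) (N : nat).
Hypothesis N_gt0 : (0 < N)%N.
Local Notation C := R[i].

Definition omega : C := expi (- (2 * pi / N%:R)).

Lemma omegaX b : omega ^+ b = (expi (pi *+ 2 * (b%:R / N%:R)))^*.
Proof. by rewrite /omega expiX expiJ; congr expi; rewrite mulrN mulr_natl; ring. Qed.

Lemma twiddleE k n : twiddle N k n = omega ^+ (k * n).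
Proof. by rewrite /twiddle /omega expiX mulrN mulrCA -mulrA. Qed.

Lemma omega_prim : N.-primitive_root omega.
Proof.
rewrite /primitive_root_of_unity N_gt0; apply/forallP => i; rewrite unity_rootE omegaX.
have N_neq0 : N%:R != 0 :> R by rewrite pnatr_eq0 -lt0n.
have pi2_gt0 : 0 < pi *+ 2 :> R by rewrite mulrn_wgt0 // pi_gt0.
have [->|iN] := eqVneq i.+1 N.
  by rewrite mulfV // mulr1 /expi cos2pi sin2pi -[(1 +i* 0)%C]/(1 : C) conjC1 !eqxx.
rewrite fmorph_eq1; apply/eqP/negbTE/expi_neq1/andP; split.
  by rewrite mulr_gt0 // divr_gt0 ?ltr0n.
rewrite -[ltRHS]mulr1 ltr_pM2l // ltr_pdivrMr ?ltr0n // mul1r ltr_nat.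
by rewrite ltn_neqAle iN; exact: ltn_ord.
Qed.

Lemma omegaJ j : (omega ^+ j)^* = omega ^+ ((N - 1) * j).
Proof.
have omega_neq0 : omega != 0 by rewrite (prim_root_eq0 omega_prim) -lt0n.
have omegaJ1 : omega^* = omega ^+ (N - 1).
  apply: (mulfI omega_neq0); rewrite -exprS subn1 prednK // (prim_expr_order omega_prim).
  by rewrite /omega expiJ -expiD subrr expi0.
by rewrite exprM -omegaJ1 rmorphXn.
Qed.

End DFT.

Section Autocorrelation.
Variables (R : realType) (N : nat) (g x : nat -> R[i]).
Hypothesis N_gt0 : (0 < N)%N.

Definition windowed m n := x n * g ((m + N - n) %% N)%N.

(* (N - 1) * n' stands for -n' modulo N, avoiding truncated subtraction. *)
Lemma dvdn_lag n n' l : (n' < N)%N ->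
  (N %| n + (N - 1) * n' + l)%N = (n' == (n + l) %% N)%N.
Proof.
move=> n'N; have n'_le : (n' <= n' * N)%N by rewrite leq_pmulr.
have -> : (n + (N - 1) * n' + l = n' * N + (n + l) - n')%N.
  by rewrite mulnBl mul1n mulnC; lia.
rewrite /dvdn -(mod0n N) -(eqn_modDr n') subnK ?(leq_trans n'_le) ?leq_addr //.
by rewrite add0n modnMDl (modn_small n'N) eq_sym.
Qed.

Lemma Zcoef_stft_mag2 m l : Zcoef N (stft_mag2 N g x) m l =
  N%:R * \sum_(n < N) windowed m n * (windowed m ((n + l) %% N))^*.
Proof.
have mag2_twiddleE k : stft_mag2 N g x m k * twiddle N k l =
    \sum_(n < N) \sum_(n' < N) windowed m n * (windowed m n')^* *
      omega R N ^+ (k * (n + (N - 1) * n' + l)).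
  rewrite /stft_mag2 normCK /stft rmorph_sum mulr_suml mulr_suml; apply: eq_bigr => n _.
  rewrite mulr_sumr mulr_suml; apply: eq_bigr => n' _.
  rewrite !twiddleE !rmorphM /= omegaJ // /windowed !mulnDr mulnCA !exprD; ring.
rewrite /Zcoef; under eq_bigr do rewrite mag2_twiddleE.
rewrite exchange_big mulr_sumr.
apply: eq_bigr => n _; rewrite exchange_big /=.
under eq_bigr do rewrite -mulr_sumr (sum_prim_root_exp _ (omega_prim R N_gt0)).
rewrite (bigD1 (Ordinal (ltn_pmod (n + l) N_gt0))) //= big1 ?addr0.
  by rewrite dvdn_lag ?ltn_pmod // eqxx mulrC.
move=> n' n'_neq; rewrite dvdn_lag // ifF ?mulr0 //.
by apply: contraNF n'_neq => /eqP n'E; apply/eqP/val_inj.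
Qed.

Definition lag_product l : 'cV[R[i]]_N := \col_(n < N) (x n * (x ((n + l) %% N)%N)^*).

Lemma zvec_stft_mag2 l : (l < N)%N ->
  zvec N (stft_mag2 N g x) l = N%:R *: (Gmat N g l *m lag_product l).
Proof.
move=> lN; apply/matrixP => i j; rewrite (ord1 j) !mxE Zcoef_stft_mag2; congr (_ * _).
apply: eq_bigr => n _; rewrite !mxE /Gcol /windowed modn_mod (modn_small lN) modnBB //.
by rewrite rmorphM; ring.
Qed.

Lemma xl_vec_stft_mag2 l : (l < N)%N -> Gmat N g l \in unitmx ->
  xl_vec N g (stft_mag2 N g x) l = lag_product l.
Proof.
move=> lN G_unit; rewrite /xl_vec zvec_stft_mag2 // -scalemxAr mulKmx // scalerA.
by rewrite mulVf ?scale1r // pnatr_eq0 -lt0n.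
Qed.

Lemma xl_stft_mag2 l n : (l < N)%N -> (n < N)%N -> Gmat N g l \in unitmx ->
  xl N g (stft_mag2 N g x) l n = x n * (x ((n + l) %% N)%N)^*.
Proof. by move=> lN nN G_unit; rewrite /xl xl_vec_stft_mag2 // /vget insubT /= mxE. Qed.

End Autocorrelation.

Section Periodic.
Variables (T : Type) (h : nat -> T).

Lemma periodicM p : (forall a, h (a + p)%N = h a) -> forall q a, h (a + q * p)%N = h a.
Proof. by move=> hp; elim=> [|q IH] a; rewrite ?mul0n ?addn0 // mulSn addnA IH hp. Qed.

Lemma periodic_coprime_const N K : (0 < N)%N -> coprime N K ->
  (forall a, h (a + K)%N = h a) -> (forall a, h (a + N)%N = h a) -> forall a, h a = h 0%N.
Proof.
move=> N_gt0 coNK hK hN.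
have [q _ /dvdnP[d Bq]] := Bezoutl K N_gt0; rewrite (eqP coNK) in Bq.
have hS a : h a.+1 = h a by rewrite -[RHS](periodicM hN d) -Bq addnA addn1 periodicM.
by elim=> // a IH; rewrite hS.
Qed.

End Periodic.

Lemma window_sums_eq0 (F : numDomainType) (h : nat -> F) N K :
  (0 < N)%N -> (0 < K)%N -> coprime N K -> (forall a, h (a + N)%N = h a) ->
  (forall a, \sum_(t < K) h (a + t)%N = 0) -> forall a, h a = 0.
Proof.
move=> N_gt0 K_gt0 coNK hN hsum.
have hK a : h (a + K)%N = h a.
  have : \sum_(t < K) h (a.+1 + t)%N = \sum_(t < K) h (a + t)%N by rewrite !hsum.
  case: (K) K_gt0 => // K' _; rewrite big_ord_recr big_ord_recl /= addn0.
  under [in RHS]eq_bigr do rewrite /bump /= add1n -addSnnS.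
  by rewrite [LHS]addrC => /addIr; rewrite addSnnS.
have hc := periodic_coprime_const N_gt0 coNK hK hN.
have := hsum 0%N; under eq_bigr do rewrite add0n hc.
rewrite sumr_const card_ord -mulr_natl => /eqP; rewrite mulf_eq0 pnatr_eq0 eqn0Ngt K_gt0 /=.
by move=> /eqP h0 a; rewrite hc.
Qed.

Definition circulant (T : Type) N (c : nat -> T) : 'M[T]_N :=
  \matrix_(i < N, j < N) c ((i + N - j) %% N)%N.

Lemma circulant_interval_unitmx (F : numFieldType) N (c : nat -> F) s K :
  (0 < K)%N -> (K <= N)%N -> coprime N K ->
  (forall t, (t < N)%N -> c ((s + t) %% N)%N = if (t < K)%N then 1 else 0) ->
  circulant N c \in unitmx.
Proof.
move=> K_gt0 KN coNK c_ind; have N_gt0 : (0 < N)%N := leq_trans K_gt0 KN.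
rewrite unitmxE unitfE; apply/negP => /det0P[v v_neq0 vc0].
pose f a := v 0 (Ordinal (ltn_pmod a N_gt0)).
have f_mod a : f (a %% N)%N = f a by congr (v 0 _); apply: val_inj; rewrite /= modn_mod.
have fN a : f (a + N)%N = f a by rewrite -f_mod modnDr f_mod.
have window j : \sum_(t < K) f (j + (s + t))%N = 0.
  move/rowP/(_ (Ordinal (ltn_pmod j N_gt0))): vc0; rewrite !mxE => vc0j; rewrite -[RHS]vc0j.
  pose shift (t : 'I_N) := Ordinal (ltn_pmod (j + (s + t)) N_gt0).
  have shift_inj : injective shift.
    move=> t t' /(congr1 val) /= /eqP; rewrite !eqn_modDl !modn_small // => /eqP.
    exact: val_inj.
  rewrite (reindex_inj shift_inj) (big_ord_widen N (fun t => f (j + (s + t))%N)) //.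
  rewrite big_mkcond; apply: eq_bigr => t _; rewrite !mxE /=.
  rewrite -modnDml modnDKB ?(ltnW (ltn_pmod j N_gt0)) // c_ind //.
  by case: ifP; rewrite ?mulr1 ?mulr0 // -f_mod modnDml f_mod.
have h0 : forall a, f (s + a)%N = 0.
  apply: (window_sums_eq0 N_gt0 K_gt0 coNK) => [a|a]; first by rewrite addnA fN.
  by under eq_bigr do rewrite addnCA; exact: window.
apply/negP: v_neq0; rewrite negbK; apply/eqP/rowP => i; rewrite mxE.
have -> : v 0 i = f i by congr (v 0 _); apply: val_inj; rewrite /= modn_small.
by rewrite -(periodicM fN s i) -[in (s * N)%N](prednK N_gt0) mulnS addnCA h0.
Qed.

Section RectangularWindow.
Variables (R : realType) (N W : nat).
Hypotheses (N_gt1 : (1 < N)%N) (WN : (W <= N - 1)%N).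
Local Notation g := (@rect_window R N W).

Lemma Gcol_rect_lag0 t : (t < N)%N ->
  Gcol N g 0 ((0 + t) %% N)%N = if (t < W)%N then 1 else 0.
Proof.
move=> tN; rewrite /Gcol /rect_window add0n !modn_mod mod0n subn0 modnDr !modn_mod.
by rewrite modn_small //; case: ifP => _; rewrite ?conjC1 ?mulr1 ?mul0r.
Qed.

Lemma Gcol_rect_lag1 t : (t < N)%N ->
  Gcol N g 1 ((1 + t) %% N)%N = if (t < W - 1)%N then 1 else 0.
Proof.
move=> tN; rewrite /Gcol /rect_window !modn_mod (@modn_small 1) //.
have [tN1|tN1] := ltnP t.+1 N.
  rewrite add1n (modn_small tN1) (_ : t.+1 + N - 1 = t + N)%N ?modnDr ?modn_small; try lia.
  have -> : (t.+1 < W)%N = (t < W - 1)%N by lia.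
  case: ifP => [tW|_]; last by rewrite mul0r.
  by rewrite ifT ?conjC1 ?mulr1 //; lia.
have -> : (1 + t = 0 + N)%N by lia.
rewrite modnDr mod0n add0n (@modn_small (N - 1)); last lia.
have -> : (N - 1 < W)%N = false by lia.
by rewrite conjC0 mulr0 ifF //; lia.
Qed.

End RectangularWindow.

Lemma normr_phase (R : realType) (z : R[i]) : z != 0 -> `| `|z| / z | = 1.
Proof. by move=> z_neq0; rewrite normrM normfV normr_id mulfV // normr_eq0. Qed.

Lemma xhat_lag_products (R : realType) N (g : nat -> R[i]) Y (x : nat -> R[i]) :
  (forall n, (n < N)%N -> x n != 0) ->
  (forall n, (n < N)%N -> xl N g Y 0 n = x n * (x n)^*) ->
  (forall n, (n.+1 < N)%N -> xl N g Y 1 n = x n * (x n.+1)^*) ->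
  forall n, (n < N)%N -> xhat N g Y n = `|x 0%N| / x 0%N * x n.
Proof.
move=> x_neq0 xl0 xl1 n nN.
have x0_neq0 : x 0%N != 0 by apply: x_neq0; exact: leq_ltn_trans nN.
set u := `|x 0%N| / x 0%N.
have u_neq0 : u != 0 by rewrite -normr_eq0 normr_phase ?oner_eq0.
have uJ : u^* = u^-1.
  by rewrite -[u^*]mul1r -(mulVf u_neq0) -mulrA -(normCK u) normr_phase // expr1n mulr1.
elim: n nN => [N_gt0|n IH n1N] /=.
  rewrite xl0 //.
  have -> : x 0%N * (x 0%N)^* = `|x 0%N| ^+ 2 by rewrite normCK.
  by rewrite sqrCK // mulfVK.
have nN : (n < N)%N := ltnW n1N.
rewrite IH // xl1 // [u * _]mulrC invfM mulrA [x n * _]mulrC mulfK ?x_neq0 //.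
change (((x n.+1)^* / u)^* = u * x n.+1).
by rewrite rmorphM /= conjCK fmorphV /= uJ invrK mulrC.
Qed.

Theorem corollary2 (R : realType) (N W : nat) :
  (3 <= N)%N ->
  (2 <= W)%N -> (W <= N - 1)%N ->
  coprime N W -> coprime N (W - 1) ->
  forall x : nat -> R[i],
    (forall n, (n < N)%N -> x n != 0) ->
    exists phi : R, forall n, (n < N)%N ->
      algebraic_algorithm N (rect_window N W)
        (stft_mag2 N (rect_window N W) x) n = expi phi * x n.
Proof.
move=> N_ge3 W_ge2 WN coNW coNW1 x x_neq0.
have N_gt0 : (0 < N)%N by lia.
set g := rect_window N W.
have G0_unit : Gmat N g 0 \in unitmx.
  change (circulant N (Gcol N g 0) \in unitmx).
  apply: (@circulant_interval_unitmx _ N _ 0 W) => //; try lia.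
  exact: Gcol_rect_lag0.
have G1_unit : Gmat N g 1 \in unitmx.
  change (circulant N (Gcol N g 1) \in unitmx).
  apply: (@circulant_interval_unitmx _ N _ 1 (W - 1)) => //; try lia.
  by apply: Gcol_rect_lag1; lia.
have [phi phiE] := expi_onto (normr_phase (x_neq0 0%N N_gt0)).
exists phi => n nN; rewrite phiE.
apply: xhat_lag_products => // [k kN|k k1N].
  by rewrite xl_stft_mag2 // addn0 modn_small.
by rewrite xl_stft_mag2 ?addn1 ?modn_small //; lia.
Qed.
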